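(* The subspace $\mathfrak t_0=\mathrm{span}\{H_1,H_2,Z,\tilde r_1,\tilde r_2\}$ is an abelian Lie subalgebra of $\mathfrak O_\kappa$, i.e. the elements $H_1,H_2,Z,\tilde r_1,\tilde r_2$ of $\mathfrak O_\kappa$ pairwise commute.
   Context: Let $V_{\mathbb R}=\mathbb R^4$ with standard inner product $(\cdot,\cdot)$ and orthonormal basis $x_1,\dots,x_4$; $V=\mathbb C^4$ with bilinear extension; $B(x)(y)=(x,y)$. Fix positive integers $m_1,m_2$. $R\subset V_\mathbb R$ consists of $\alpha_p=(\sin(p\pi/m_1),-\cos(p\pi/m_1),0,0)$ ($p=1,\dots,2m_1$) and $\beta_q=(0,0,\sin(q\pi/m_2),-\cos(q\pi/m_2))$ ($q=1,\dots,2m_2$); $R_+=\{\alpha_1,\dots,\alpha_{m_1},\beta_1,\dots,\beta_{m_2}\}$; reflections $s_\alpha(x)=x-2\frac{(x,\alpha)}{(\alpha,\alpha)}\alpha$ generate $W\cong D_{2m_1}\times D_{2m_2}$. $\kappa:R\to\mathbb C$ is $W$-invariant. $H_\kappa$: quotient of $T(V\oplus V^* )\rtimes\mathbb CW$ by $[x,y]=0=[\xi,\eta]$, $[\xi,x]=\xi(x)+\sum_{\alpha\in R_+}\frac{2\kappa_\alpha}{(\alpha,\alpha)}(B^{-1}(\xi),\alpha)(x,\alpha)s_\alpha$. $\mathcal C$: Clifford algebra on $e_1,\dots,e_4$ ($e_je_k+e_ke_j=2\delta_{jk}$, $e_j$ odd); $\gamma:\bigwedge V\to\mathcal C$ antisymmetrisation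 ($\gamma(x_j)=e_j$, $\gamma(v_1\wedge\cdots\wedge v_p)=\frac1{p!}\sum_{g\in S_p}\mathrm{sgn}(g)\gamma(v_{g(1)})\cdots\gamma(v_{g(p)})$). On $H_\kappa\otimes\mathcal C$ (graded via $\mathcal C$): $[\![a,b]\!]=ab-(-1)^{|a||b|}ba$. With $\xi_j=B(x_j)$, $\underline D=\sum\xi_j\otimes e_j$, $\underline x=\sum x_j\otimes e_j$, $\Delta_\kappa=\sum\xi_j^2$, $|x|^2=\sum x_j^2$, $E=\frac12\sum(x_j\xi_j+\xi_jx_j)$ span $\mathfrak g$; $\mathfrak O_\kappa$ is the graded centraliser of $\mathfrak g$ in $H_\kappa\otimes\mathcal C$. $\tilde W\subset\mathcal C^\times$ generated by the $\gamma(\alpha)$, $\alpha\in R$, is embedded in $\mathfrak O_\kappa$ by $\tilde w\mapsto\pi(\tilde w)\otimes\tilde w$ ($\pi(\gamma(\alpha))=s_\alpha$); $\tilde s_p,\tilde t_q$ images of $\gamma(\alpha_p),\gamma(\beta_q)$; $\tilde r_1=-\tilde s_{m_1}\tilde s_1$, $\tilde r_2=-\tilde t_{m_2}\tilde t_1$. $O(v)=-\frac12P(\gamma(v))$ with $P=\mathrm{id}-\frac12\mathrm{ad}(\underline D)\mathrm{ad}(\underline x)$, $\mathrm{ad}(a)b=[\![a,b]\!]$; $z_a^\pm=x_{2a-1}\pm ix_{2a}$. $H_a=\frac12O(z_a^+\wedge z_a^-)$ ($a=1,2$), $Z=O(x_1\wedge x_2\wedge x_3\wedge x_4)$. *)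

From HB Require Import structures.
From mathcomp Require Import all_boot all_order all_algebra all_fingroup.
From mathcomp Require Import complex.
From mathcomp Require Import reals trigo.
Set Implicit Arguments. Unset Strict Implicit. Unset Printing Implicit Defensive.
Import Order.TTheory GRing.Theory Num.Theory.
Local Open Scope ring_scope.

Definition toC (R : realType) (r : R) : R[i] := Complex r 0.
Definition iC (R : realType) : R[i] := Complex 0 1.

Definition ip (R : realType) (u v : 'cV[R]_4) : R := \sum_(j < 4) u j 0 * v j 0.

(* reflection s_a(x) = x - 2 (x,a)/(a,a) a, as a matrix *)
Definition refl (R : realType) (a : 'cV[R]_4) : 'M[R]_4 :=
  1%:M - (2 / ip a a) *: (a *m a^T).

(* the root system R of type I_2(m1) x I_2(m2) *)
Definition alpha (R : realType) (m1 p : nat) : 'cV[R]_4 :=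
  \col_(j < 4) [:: sin (p%:R * pi / m1%:R); - cos (p%:R * pi / m1%:R); 0; 0]`_j.
Definition beta (R : realType) (m2 q : nat) : 'cV[R]_4 :=
  \col_(j < 4) [:: 0; 0; sin (q%:R * pi / m2%:R); - cos (q%:R * pi / m2%:R)]`_j.

Definition rootsys (R : realType) (m1 m2 : nat) : seq 'cV[R]_4 :=
  [seq alpha R m1 p | p <- iota 1 (2 * m1)] ++ [seq beta R m2 q | q <- iota 1 (2 * m2)].

Definition posroots (R : realType) (m1 m2 : nat) : seq 'cV[R]_4 :=
  [seq alpha R m1 p | p <- iota 1 m1] ++ [seq beta R m2 q | q <- iota 1 m2].

Definition inW (R : realType) (m1 m2 : nat) (g : 'M[R]_4) : Prop :=
  exists s : seq 'cV[R]_4, all (fun a => a \in rootsys R m1 m2) s /\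
    g = foldr (fun a h => refl a *m h) 1%:M s.

Definition cvC (R : realType) (v : 'cV[R]_4) : 'cV[R[i]]_4 := map_mx (@toC R) v.

Definition lin (R : realType) (B : algType R[i]) (g : 'I_4 -> B) (v : 'cV[R[i]]_4) : B :=
  \sum_(j < 4) v j 0 *: g j.

(* functional on V, as a row vector f (f(y) = f *m y); xi(f) = sum_j f_j xi_j *)
Definition linr (R : realType) (B : algType R[i]) (g : 'I_4 -> B) (f : 'rV[R[i]]_4) : B :=
  \sum_(j < 4) f 0 j *: g j.

Definition ev (R : realType) (j : 'I_4) : 'cV[R]_4 := \col_(k < 4) (k == j)%:R.

(* The graded bracket on H_kappa (x) C: the parity of an element is     *)
(* supplied explicitly (true = odd).                                    *)
Definition sbr (K : nzRingType) (pa pb : bool) (a b : K) : K :=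
  a * b - (-1) ^+ (pa && pb) * (b * a).

(* gamma : /\^k V -> Clifford algebra, on decomposable k-vectors,       *)
Definition gam1 (R : realType) (B : algType R[i]) (e : 'I_4 -> B) (v : 'cV[R[i]]_4) : B :=
  lin e v.

Definition gamw (R : realType) (B : algType R[i]) (e : 'I_4 -> B) (k : nat)
  (v : 'I_k -> 'cV[R[i]]_4) : B :=
  (k`!%:R : R[i])^-1 *:
    \sum_(g : 'S_k) ((-1) ^+ odd_perm g : R[i]) *: \prod_(i < k) gam1 e (v (g i)).

(* Dirac and xs are odd.                                                *)
Definition Pop (R : realType) (B : algType R[i]) (Dirac xs : B) (pa : bool) (a : B) : B :=
  a - (1 / 2 : R[i]) *: sbr true (~~ pa) Dirac (sbr true pa xs a).

(* gamma(v) is k mod 2.                                                 *)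
Definition Oop (R : realType) (B : algType R[i]) (e : 'I_4 -> B) (Dirac xs : B) (k : nat)
  (v : 'I_k -> 'cV[R[i]]_4) : B :=
  (- (1 / 2) : R[i]) *: Pop Dirac xs (odd k) (gamw e v).

(* z_a^{+-} = x_{2a-1} +- i x_{2a}, a = 1,2 (0-based indices 2a-2, 2a-1) *)
Definition zvec (R : realType) (a : nat) (sg : bool) : 'cV[R[i]]_4 :=
  \col_(k < 4) (if k == (2 * a - 2)%N :> nat then 1
               else if k == (2 * a - 1)%N :> nat then (if sg then iC R else - iC R)
               else 0).

Definition zpair (R : realType) (a : nat) : 'I_2 -> 'cV[R[i]]_4 :=
  fun i => if i == 0 :> nat then zvec R a true else zvec R a false.
Definition x1234 (R : realType) : 'I_4 -> 'cV[R[i]]_4 := fun i => cvC (ev R i).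

(* With X = sum_j x_j e_j and D = sum_j xi_j e_j, the Cherednik relations give
   {X, D} = sum_k (x_k xi_k + xi_k x_k) =: E, X^2 = sum_k x_k^2, D^2 = sum_k xi_k^2 =: L
   and [E, x_l] = 2 x_l, [L, x_l] = 2 xi_l: the reflection terms cancel because s_a
   anticommutes with a(x) = sum_k a_k x_k.  Hence for every a commuting with H_kappa (x) 1
   the element P(a) = a - 1/2 {D, [X, a]} commutes with X and D, and an element that
   commutes, or anticommutes, with both X and D commutes with P(a) as soon as it commutes
   with a.  Each s~_a = s_a gamma(a) is an involution conjugating X and D to their
   negatives, so r~_1 and r~_2 commute with X and D too.  What remains are commutations
   in the Clifford factor: the alpha_p and z_1^+- lie in the plane span(x_1, x_2), the
   beta_q and z_2^+- in its orthogonal complement, bivectors of one plane commute with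
   each other and with those of the other plane, and the pseudoscalar anticommutes with
   every vector.  For [H_1, H_2] one also needs [xi_j, x_k] = 0 for j and k in different
   planes, which holds because no root mixes the two planes. *)

From HB Require Import structures.
From mathcomp Require Import all_boot all_order all_algebra all_fingroup.
From mathcomp Require Import complex.
From mathcomp Require Import reals trigo.
From mathcomp Require Import zify ring.
Import Order.TTheory GRing.Theory Num.Theory.
Local Open Scope ring_scope.
Set Implicit Arguments. Unset Strict Implicit. Unset Printing Implicit Defensive.

Local Notation comm := GRing.comm.

Lemma subrACA (V : zmodType) (p q r t : V) : p - r - (q - t) = p - q - (r - t).
Proof. by rewrite !opprB addrACA [RHS]addrACA addrC [RHS]addrC [- r + _]addrC. Qed.

Section Anticommutation.
Variable A : pzRingType.
Implicit Types x y z u : A.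

Definition anticomm x y := x * y = - (y * x).

Lemma anticommr_sym x y : anticomm x y -> anticomm y x.
Proof. by rewrite /anticomm => ->; rewrite opprK. Qed.

Lemma anticommr0 x : anticomm x 0.
Proof. by rewrite /anticomm mulr0 mul0r oppr0. Qed.

Lemma anticommrD x y z : anticomm x y -> anticomm x z -> anticomm x (y + z).
Proof. by rewrite /anticomm mulrDl mulrDr opprD => -> ->. Qed.

Lemma anticommrN x y : anticomm x y -> anticomm x (- y).
Proof. by rewrite /anticomm mulNr mulrN => ->. Qed.

Lemma anticommr_sum (I : Type) (r : seq I) (P : pred I) (F : I -> A) x :
  (forall i, P i -> anticomm x (F i)) -> anticomm x (\sum_(i <- r | P i) F i).
Proof. exact: (big_ind _ (anticommr0 x) (@anticommrD x)). Qed.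

Lemma commr_anticommM x y z : anticomm x y -> anticomm x z -> comm x (y * z).
Proof. by rewrite /comm /anticomm mulrA => -> Hz; rewrite mulNr -mulrA Hz mulrN opprK mulrA. Qed.

Lemma anticommr_commM x y z : comm x y -> anticomm x z -> anticomm x (y * z).
Proof. by rewrite /comm /anticomm mulrA => -> Hz; rewrite -mulrA Hz mulrN mulrA. Qed.

Lemma anticommrM_comm x y z : anticomm x y -> comm x z -> anticomm x (y * z).
Proof. by rewrite /comm /anticomm mulrA => -> Hz; rewrite mulNr -mulrA Hz mulrA. Qed.

Lemma anticomm_conj u y : u * u = 1 -> u * y * u = - y -> anticomm u y.
Proof.
rewrite /anticomm => uu uyu; have -> : y * u = u * (u * y * u) by rewrite !mulrA uu mul1r.
by rewrite uyu mulrN opprK.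
Qed.

Lemma commutator_anticommutator u x y :
  u * (x * y + y * x) - (x * y + y * x) * u =
  ((u * x + x * u) * y - y * (u * x + x * u)) - (x * (u * y + y * u) - (u * y + y * u) * x).
Proof.
rewrite !mulrDr !mulrDl !mulrA.
move: (u * x * y) (u * y * x) (x * y * u) (y * x * u) (x * u * y) (y * u * x) => p q r s t w.
rewrite opprB addrACA -opprD addrACA [w + s + _]addrACA [t + w]addrC [s + r]addrC.
by rewrite [w + t]addrC addrKA.
Qed.

Lemma commutator_sqr x y : x * x * y - y * (x * x) = x * (x * y - y * x) + (x * y - y * x) * x.
Proof. by rewrite mulrBr mulrBl !mulrA addrA subrK. Qed.

Lemma commutator_anticommutator_l x y z : comm x z ->
  (x * y + y * x) * z - z * (x * y + y * x) = x * (y * z - z * y) + (y * z - z * y) * x.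
Proof.
move=> xz; rewrite mulrDl mulrDr !mulrBr !mulrBl !mulrA -(mulrA y x z) xz mulrA -xz.
by rewrite opprD addrACA.
Qed.

Lemma commutator_sum_mul (I : Type) (r : seq I) (y c : I -> A) z :
  (forall i, comm z (c i)) ->
  z * (\sum_(i <- r) y i * c i) - (\sum_(i <- r) y i * c i) * z =
    \sum_(i <- r) (z * y i - y i * z) * c i.
Proof.
move=> zc; rewrite mulr_suml mulr_sumr -sumrB; apply: eq_bigr => i _.
by rewrite mulrBl !mulrA -[y i * c i * z]mulrA -zc mulrA.
Qed.

Lemma anticommM_split p q r t :
  comm p r -> comm p t -> comm q r -> anticomm q t -> anticomm (p * q) (r * t).
Proof.
move=> pr pt qr qt; apply/anticommr_sym/anticommr_commM.
  by apply/commr_sym/commrM.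
exact/anticommr_sym/anticommr_commM.
Qed.

Definition scomm (b : bool) x y := x * y = (-1) ^+ b * (y * x).

Lemma scommr_prod n (F : 'I_n -> A) (s : 'I_n -> bool) x :
  (forall i, scomm (s i) x (F i)) ->
  scomm (odd (\sum_(i < n) s i)) x (\prod_(i < n) F i).
Proof.
elim: n F s => [|n IH] F s H; first by rewrite /scomm !big_ord0 expr0 mul1r mulr1 mul1r.
rewrite /scomm !big_ord_recr /= oddD signr_addb mulrA.
rewrite (IH (fun i => F (widen_ord (leqnSn n) i)) (fun i => s (widen_ord (leqnSn n) i))) //.
set P := \prod_(i < n) _.
by rewrite -!mulrA (H ord_max) oddb [P * _]mulrA commr_sign -mulrA.
Qed.

Lemma pairwise_commP (r : seq A) :
  pairwise (fun x y => x * y == y * x) r -> {in r &, forall x y, comm x y}.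
Proof.
rewrite pairwise_all2rel => [/allrelP H x y rx ry|x|x y]; first exact/eqP/H.
  exact: eqxx.
by rewrite eq_sym.
Qed.

End Anticommutation.

Section ScaledCommutation.
Variables (K : pzRingType) (A : algType K).
Implicit Types (x y : A) (c : K).

Lemma commrZ x y c : comm x y -> comm x (c *: y).
Proof. by rewrite /comm -scalerAl -scalerAr => ->. Qed.

Lemma anticommrZ x y c : anticomm x y -> anticomm x (c *: y).
Proof. by rewrite /anticomm -scalerAl -scalerAr => ->; rewrite scalerN. Qed.

Lemma anticommutatorZ x y c : x * (c *: y) + (c *: y) * x = c *: (x * y + y * x).
Proof. by rewrite -scalerAr -scalerAl scalerDr. Qed.

Lemma commrZZ x y c d : comm x y -> comm (c *: x) (d *: y).
Proof. by move=> cxy; apply/commrZ/commr_sym/commrZ. Qed.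

End ScaledCommutation.

Section Halves.
Variables (K : numFieldType) (V : lmodType K).

Lemma half_scale2 (y : V) : (1 / 2 : K) *: (2 *: y) = y.
Proof. by rewrite scalerA mul1r mulVf ?pnatr_eq0 // scale1r. Qed.

Lemma half_add (y : V) : (1 / 2 : K) *: (y + y) = y.
Proof. by rewrite -mulr2n -scaler_nat half_scale2. Qed.

End Halves.

Section DiracProjection.
Variables (R : realType) (B : algType R[i]) (D X : B).
Local Notation P := (Pop D X false).

Lemma PopE a :
  P a = a - (1 / 2 : R[i]) *: (D * (X * a - a * X) + (X * a - a * X) * D).
Proof. by rewrite /Pop /sbr /= expr0 expr1 !mul1r mulN1r opprK. Qed.

Lemma commutator_subZ (y a c : B) (h : R[i]) :
  y * (a - h *: c) - (a - h *: c) * y = (y * a - a * y) - h *: (y * c - c * y).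
Proof. by rewrite mulrBr mulrBl -scalerAl -scalerAr subrACA -scalerBr. Qed.

Lemma Pop_commX a :
  comm (X * X) a ->
  (X * D + D * X) * (X * a - a * X) - (X * a - a * X) * (X * D + D * X) =
    2 *: (X * a - a * X) ->
  comm X (P a).
Proof.
rewrite PopE => XXa Fb.
have Xb : X * (X * a - a * X) + (X * a - a * X) * X = 0.
  by rewrite mulrBr mulrBl !mulrA addrA subrK XXa mulrA subrr.
apply/eqP; rewrite -subr_eq0 commutator_subZ commutator_anticommutator Fb Xb.
by rewrite mulr0 mul0r subrr subr0 half_scale2 subrr.
Qed.

Lemma Pop_commD a :
  D * D * (X * a - a * X) - (X * a - a * X) * (D * D) = 2 *: (D * a - a * D) ->
  comm D (P a).
Proof.
rewrite PopE; move: (X * a - a * X) => b DDb.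
have DDb' : D * (D * b + b * D) - (D * b + b * D) * D = 2 *: (D * a - a * D).
  by rewrite mulrDr mulrDl !mulrA addrKA -[b * D * D]mulrA.
by apply/eqP; rewrite -subr_eq0 commutator_subZ DDb' half_scale2 subrr.
Qed.

Lemma commr_Pop y a : comm y D -> comm y X -> comm y a -> comm y (P a).
Proof.
move=> yD yX ya; rewrite PopE.
have yb : comm y (X * a - a * X) by apply: commrB; apply: commrM.
by apply: commrB => //; apply/commrZ/commrD; apply: commrM.
Qed.

Lemma commr_Pop_anticomm y a :
  anticomm y D -> anticomm y X -> comm y a -> comm y (P a).
Proof.
move=> yD yX ya; rewrite PopE.
have yb : anticomm y (X * a - a * X).
  by apply/anticommrD/anticommrN; [apply: anticommrM_comm | apply: anticommr_commM].
by apply: commrB => //; apply/commrZ/commrD; apply: commr_anticommM.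
Qed.

End DiracProjection.

Lemma toCE (R : realType) : @toC R = real_complex R.
Proof. by []. Qed.

Definition supp_in (K : nmodType) n (P : pred 'I_n) (u : 'cV[K]_n) :=
  forall j, ~~ P j -> u j 0 = 0.

(* 0-based indices: the plane span(x_1, x_2). *)
Definition plane12 : pred 'I_4 := fun j => (j < 2)%N.

Lemma supp_plane12 (K : nmodType) (u : 'cV[K]_4) : supp_in plane12 u -> supp_in (pred2 0 1) u.
Proof. by move=> Pu [[|[|[|[|j]]]] lt_j4] //= _; rewrite Pu. Qed.

Lemma supp_plane34 (K : nmodType) (u : 'cV[K]_4) :
  supp_in (predC plane12) u -> supp_in (pred2 2 3) u.
Proof. by move=> Pu [[|[|[|[|j]]]] lt_j4] //= _; rewrite Pu. Qed.

Lemma supp_cvC_ev (R : realType) (P : pred 'I_4) k : P k -> supp_in P (cvC (ev R k)).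
Proof.
move=> Pk j Pj; rewrite !mxE; case: eqP => [jk|_]; first by rewrite jk Pk in Pj.
by rewrite toCE rmorph0.
Qed.

Lemma supp_cvC (R : realType) (P : pred 'I_4) (a : 'cV[R]_4) :
  supp_in P a -> supp_in P (cvC a).
Proof. by move=> Pa j Pj; rewrite mxE Pa // toCE rmorph0. Qed.

Lemma zpair1_supp (R : realType) i : supp_in plane12 (zpair R 1 i).
Proof. by rewrite /zpair; case: ifP => _ [[|[|[|[|j]]]] lt_j4] //= _; rewrite mxE. Qed.

Lemma zpair2_supp (R : realType) i : supp_in (predC plane12) (zpair R 2 i).
Proof. by rewrite /zpair; case: ifP => _ [[|[|[|[|j]]]] lt_j4] //= _; rewrite mxE. Qed.

Lemma supp_orth (K : pzRingType) (Q : pred 'I_4) (a b : 'cV[K]_4) :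
  supp_in Q a -> supp_in (predC Q) b -> a^T *m b = 0.
Proof.
move=> Qa Qb; apply/matrixP => i j; rewrite !ord1 !mxE big1 // => k _; rewrite mxE.
by case: (boolP (Q k)) => Qk; [rewrite Qb ?mulr0 ?negbK | rewrite Qa ?mul0r].
Qed.

Section CliffordGenerators.
Variables (R : realType) (B : algType R[i]) (e : 'I_4 -> B).
Hypothesis He : forall j k, e j * e k + e k * e j = (2 * (j == k)%:R) *: 1.
Local Notation gam := (gam1 e).

Definition bil (u v : 'cV[R[i]]_4) : R[i] := \sum_j u j 0 * v j 0.

Lemma e_sq j : e j * e j = 1.
Proof. by rewrite -[LHS]half_add He eqxx mulr1 half_scale2. Qed.

Lemma e_anticomm j k : j != k -> anticomm (e j) (e k).
Proof.
by move=> /negbTE jk; apply/eqP; rewrite -addr_eq0 He jk mulr0 scale0r.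
Qed.

Lemma gamE u : gam u = \sum_j u j 0 *: e j.
Proof. by []. Qed.

Lemma gam_ev j : gam (cvC (ev R j)) = e j.
Proof.
rewrite gamE (bigD1 j) //= big1 => [|k /negbTE kj]; rewrite !mxE ?kj.
  by rewrite eqxx toCE rmorph1 scale1r addr0.
by rewrite toCE rmorph0 scale0r.
Qed.

Lemma cliff_expand (f g : 'I_4 -> B) : (forall j k, comm (e j) (g k)) ->
  (\sum_j f j * e j) * (\sum_k g k * e k) = \sum_j \sum_k f j * g k * (e j * e k).
Proof.
move=> eg; rewrite mulr_suml; apply: eq_bigr => j _; rewrite mulr_sumr.
by apply: eq_bigr => k _; rewrite -!mulrA; congr (_ * _); rewrite !mulrA eg.
Qed.

Lemma cliff_sum_sym (N : 'I_4 -> 'I_4 -> B) :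
  (forall j k, N j k = N k j) ->
  \sum_j \sum_k N j k * (e j * e k) = \sum_j N j j.
Proof.
move=> Nsym; rewrite -[LHS]half_add -[RHS]half_scale2; congr (_ *: _).
rewrite [X in _ + X]exchange_big -big_split scaler_sumr; apply: eq_bigr => j _ /=.
transitivity (\sum_k (2 * (j == k)%:R) *: N j k).
  by rewrite -big_split; apply: eq_bigr => k _ /=; rewrite (Nsym k j) -mulrDr He -scalerAr mulr1.
rewrite (bigD1 j) //= eqxx mulr1 big1 ?addr0 // => k /negbTE kj.
by rewrite eq_sym kj mulr0 scale0r.
Qed.

Lemma cliff_anticommutator (f g : 'I_4 -> B) :
  (forall j k, comm (e j) (f k)) -> (forall j k, comm (e j) (g k)) ->
  (forall j k, f j * g k - g k * f j = f k * g j - g j * f k) ->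
  (\sum_j f j * e j) * (\sum_k g k * e k) + (\sum_k g k * e k) * (\sum_j f j * e j)
    = \sum_j (f j * g j + g j * f j).
Proof.
move=> fe ge fg.
rewrite !cliff_expand //.
rewrite -big_split /=; under eq_bigr do rewrite -big_split /=.
under eq_bigr do under eq_bigr do rewrite -mulrDl.
apply: cliff_sum_sym => j k.
by rewrite -[f j * g k](subrK (g k * f j)) fg addrAC subrK.
Qed.

Lemma cliff_sqr (y : 'I_4 -> B) : (forall j k, comm (e j) (y k)) ->
  (forall j k, comm (y j) (y k)) ->
  (\sum_j y j * e j) * (\sum_j y j * e j) = \sum_j y j * y j.
Proof.
move=> ey yy; rewrite -[LHS]half_add cliff_anticommutator // => [|j k].
  by rewrite big_split half_add.
by rewrite (yy j k) (yy k j) !subrr.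
Qed.

Lemma commutator_cliff_sum (y : 'I_4 -> B) a : (forall l, comm (y l) a) ->
  (\sum_l y l * e l) * a - a * (\sum_l y l * e l) = \sum_l y l * (e l * a - a * e l).
Proof.
move=> ya; rewrite mulr_suml mulr_sumr -sumrB; apply: eq_bigr => l _.
by rewrite mulrBr !mulrA ya.
Qed.

Lemma gam_scalarE u : gam u = \sum_j (u j 0)%:A * e j.
Proof. by apply: eq_bigr => j _; rewrite -scalerAl mul1r. Qed.

Lemma gam_anticommutator u v : gam u * gam v + gam v * gam u = (2 * bil u v)%:A.
Proof.
rewrite !gam_scalarE cliff_anticommutator => [|j k|j k|j k].
- rewrite /bil mulr_sumr scaler_suml; apply: eq_bigr => j _.
  by rewrite -!scalerAl !mul1r !scalerA mulrC -scalerDl mulr_natl mulr2n.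
- by apply/commr_sym/comm_alg.
- by apply/commr_sym/comm_alg.
by rewrite !(comm_alg (u _ 0)) !subrr.
Qed.

Lemma gam_anticomm u v : bil u v = 0 -> anticomm (gam u) (gam v).
Proof.
by move=> uv; apply/eqP; rewrite -addr_eq0 gam_anticommutator uv mulr0 scale0r.
Qed.

Lemma bil_sym u v : bil u v = bil v u.
Proof. by apply: eq_bigr => j _; rewrite mulrC. Qed.

Lemma bil_supp (P : pred 'I_4) u v : supp_in P u -> supp_in (predC P) v -> bil u v = 0.
Proof.
move=> Pu Pv; apply: big1 => j _.
by case: (boolP (P j)) => Pj; [rewrite Pv ?mulr0 ?negbK | rewrite Pu ?mul0r].
Qed.

Lemma gam_plane p q u : p != q -> supp_in (pred2 p q) u ->
  gam u = u p 0 *: e p + u q 0 *: e q.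
Proof.
move=> pq Pu; rewrite gamE (bigD1 p) //= (bigD1 q) /=; last by rewrite eq_sym.
by rewrite big1 ?addr0 ?addrA // => j /andP[jp jq]; rewrite Pu ?scale0r //= negb_or jp.
Qed.

Lemma gamM_plane p q u v : p != q -> supp_in (pred2 p q) u -> supp_in (pred2 p q) v ->
  gam u * gam v =
    (u p 0 * v p 0 + u q 0 * v q 0)%:A + (u p 0 * v q 0 - u q 0 * v p 0) *: (e p * e q).
Proof.
move=> pq Pu Pv; rewrite (gam_plane pq Pu) (gam_plane pq Pv) mulrDl !mulrDr.
rewrite -!scalerAl -!scalerAr !scalerA !e_sq (anticommr_sym (e_anticomm pq)) scalerN.
by rewrite scalerDl scalerBl [RHS]addrACA [X in _ = _ + X]addrC.
Qed.

Lemma commr_gamM_plane p q u v w t : p != q ->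
  supp_in (pred2 p q) u -> supp_in (pred2 p q) v ->
  supp_in (pred2 p q) w -> supp_in (pred2 p q) t ->
  comm (gam u * gam v) (gam w * gam t).
Proof.
move=> pq Pu Pv Pw Pt; rewrite (gamM_plane pq Pu Pv) (gamM_plane pq Pw Pt).
apply: commrD; first exact/commr_sym/comm_alg.
apply/commrZ/commr_sym/commrD; [exact/commr_sym/comm_alg | exact/commrZ/commr_refl].
Qed.

Lemma commr_gamM_orth (P : pred 'I_4) u v w t :
  supp_in P u -> supp_in P v -> supp_in (predC P) w -> supp_in (predC P) t ->
  comm (gam u * gam v) (gam w * gam t).
Proof.
move=> Pu Pv Pw Pt; have anti z : supp_in (predC P) z -> comm (gam z) (gam u * gam v).
  by move=> Pz; apply: commr_anticommM; apply: gam_anticomm; rewrite bil_sym; apply: bil_supp Pz.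
by apply: commrM; apply/commr_sym/anti.
Qed.

Lemma commr_gamw k (v : 'I_k -> 'cV[R[i]]_4) w :
  (forall g : 'S_k, comm w (\prod_(i < k) gam (v (g i)))) -> comm w (gamw e v).
Proof. by move=> H; apply/commrZ/commr_sum => g _; apply: commrZ. Qed.

Lemma anticommr_gamw k (v : 'I_k -> 'cV[R[i]]_4) w :
  (forall g : 'S_k, anticomm w (\prod_(i < k) gam (v (g i)))) -> anticomm w (gamw e v).
Proof. by move=> H; apply/anticommrZ/anticommr_sum => g _; apply: anticommrZ. Qed.

Lemma commr_bivector (v : 'I_2 -> 'cV[R[i]]_4) w :
  (forall i j, comm w (gam (v i) * gam (v j))) -> comm w (gamw e v).
Proof.
by move=> H; apply: commr_gamw => g; rewrite !big_ord_recl big_ord0 mulr1.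
Qed.

Lemma sum_perm_neq (g : 'S_4) j : (\sum_(i < 4) (g i != j) = 3)%N.
Proof.
rewrite (reindex_inj (@perm_inj _ g^-1)) /=.
under eq_bigr do rewrite permKV.
by rewrite -big_mkcond /= sum1_card cardC1 card_ord.
Qed.

Lemma e_anticomm_gam (P : pred 'I_4) k u : supp_in P u -> ~~ P k -> anticomm (e k) (gam u).
Proof.
move=> Pu Pk; rewrite -(gam_ev k); apply/gam_anticomm; rewrite bil_sym.
exact/(bil_supp Pu)/supp_cvC_ev.
Qed.

Lemma e_comm_bivector (P : pred 'I_4) k (v : 'I_2 -> 'cV[R[i]]_4) :
  (forall i, supp_in P (v i)) -> ~~ P k -> comm (e k) (gamw e v).
Proof.
by move=> Pv Pk; apply: commr_bivector => i j; apply: commr_anticommM; apply: e_anticomm_gam Pk.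
Qed.

Lemma bivector_comm_orth (P : pred 'I_4) (v w : 'I_2 -> 'cV[R[i]]_4) :
  (forall i, supp_in P (v i)) -> (forall i, supp_in (predC P) (w i)) ->
  comm (gamw e v) (gamw e w).
Proof.
move=> Pv Pw; apply: commr_bivector => i j; apply/commr_sym/commr_bivector => k l.
exact/commr_sym/(commr_gamM_orth (Pv k) (Pv l) (Pw i) (Pw j)).
Qed.

Lemma bivector_comm_gamM (v : 'I_2 -> 'cV[R[i]]_4) u w :
  (forall i j, comm (gam (v i) * gam (v j)) (gam u * gam w)) ->
  comm (gamw e v) (gam u * gam w).
Proof. by move=> H; apply/commr_sym/commr_bivector => i j; apply/commr_sym. Qed.

Lemma bivector_comm_gamM_plane p q (v : 'I_2 -> 'cV[R[i]]_4) u w : p != q ->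
  (forall i, supp_in (pred2 p q) (v i)) -> supp_in (pred2 p q) u -> supp_in (pred2 p q) w ->
  comm (gamw e v) (gam u * gam w).
Proof. by move=> pq Pv Pu Pw; apply: bivector_comm_gamM => i j; exact: (commr_gamM_plane pq). Qed.

Lemma bivector_comm_gamM_orth (P : pred 'I_4) (v : 'I_2 -> 'cV[R[i]]_4) u w :
  (forall i, supp_in P (v i)) -> supp_in (predC P) u -> supp_in (predC P) w ->
  comm (gamw e v) (gam u * gam w).
Proof. by move=> Pv Pu Pw; apply: bivector_comm_gamM => i j; apply: commr_gamM_orth. Qed.

Lemma bivector_comm_gamM_orth' (P : pred 'I_4) (v : 'I_2 -> 'cV[R[i]]_4) u w :
  (forall i, supp_in (predC P) (v i)) -> supp_in P u -> supp_in P w ->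
  comm (gamw e v) (gam u * gam w).
Proof.
by move=> Pv Pu Pw; apply: bivector_comm_gamM => i j; exact/commr_sym/(commr_gamM_orth Pu Pw).
Qed.

Lemma e_anticomm_pseudoscalar j : anticomm (e j) (gamw e (x1234 R)).
Proof.
apply: anticommr_gamw => g; rewrite /x1234.
under eq_bigr do rewrite gam_ev.
have sign i : scomm (g i != j) (e j) (e (g i)).
  rewrite /scomm; case: eqP => [->|/eqP ij]; first by rewrite mul1r.
  by rewrite expr1 mulN1r; apply/e_anticomm; rewrite eq_sym.
by have := scommr_prod sign; rewrite sum_perm_neq /scomm expr1 mulN1r.
Qed.

Lemma pseudoscalar_anticomm_gam u : anticomm (gamw e (x1234 R)) (gam u).
Proof.
rewrite gamE; apply: anticommr_sum => j _; apply: anticommrZ.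
exact/anticommr_sym/e_anticomm_pseudoscalar.
Qed.

Lemma pseudoscalar_comm_bivector (v : 'I_2 -> 'cV[R[i]]_4) :
  comm (gamw e (x1234 R)) (gamw e v).
Proof.
by apply: commr_bivector => i j; apply: commr_anticommM; apply: pseudoscalar_anticomm_gam.
Qed.

End CliffordGenerators.

Lemma invmx_invol (K : comUnitRingType) n (A : 'M[K]_n) : A *m A = 1%:M -> invmx A = A.
Proof.
move=> AA; have [Aunit _] := mulmx1_unit AA.
by rewrite -[invmx A]mulmx1 -AA mulmxA mulVmx // mul1mx.
Qed.

Section RootSystem.
Variables (R : realType) (m1 m2 : nat).
Local Notation S := (posroots R m1 m2).

Lemma ip_sym (a b : 'cV[R]_4) : ip a b = ip b a.
Proof. by apply: eq_bigr => j _; rewrite mulrC. Qed.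

Lemma ip_ev (a : 'cV[R]_4) j : ip (ev R j) a = a j 0.
Proof.
rewrite /ip (bigD1 j) //= !mxE eqxx mul1r big1 ?addr0 // => k /negbTE kj.
by rewrite !mxE kj mul0r.
Qed.

Lemma mulmx_ev (M : 'M[R]_4) k j : (M *m ev R j) k 0 = M k j.
Proof.
rewrite mxE (bigD1 j) //= big1 => [|l /negbTE lj]; first by rewrite mxE eqxx mulr1 addr0.
by rewrite mxE lj mulr0.
Qed.

Lemma alpha_unit p : ip (alpha R m1 p) (alpha R m1 p) = 1.
Proof.
rewrite /ip !big_ord_recl big_ord0 !mxE /=.
by rewrite mulr0 !addr0 mulrNN -!expr2 addrC cos2Dsin2.
Qed.

Lemma beta_unit q : ip (beta R m2 q) (beta R m2 q) = 1.
Proof.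
rewrite /ip !big_ord_recl big_ord0 !mxE /=.
by rewrite !mul0r !add0r addr0 mulrNN -!expr2 addrC cos2Dsin2.
Qed.

Lemma alpha_posroot p : (0 < p <= m1)%N -> alpha R m1 p \in S.
Proof. by move=> p_m1; rewrite mem_cat map_f // mem_iota; lia. Qed.

Lemma beta_posroot q : (0 < q <= m2)%N -> beta R m2 q \in S.
Proof. by move=> q_m2; rewrite mem_cat orbC map_f // mem_iota; lia. Qed.

Lemma posroots_rootsys : {subset S <= rootsys R m1 m2}.
Proof.
move=> a; rewrite !mem_cat => /orP[] /mapP[p]; rewrite mem_iota => p_m ->.
  by rewrite map_f // mem_iota; lia.
by rewrite orbC map_f // mem_iota; lia.
Qed.

Lemma posroots_unit a : a \in S -> ip a a = 1.
Proof. by rewrite mem_cat => /orP[] /mapP[p _ ->]; [exact: alpha_unit | exact: beta_unit]. Qed.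

Lemma alpha_supp p : supp_in plane12 (alpha R m1 p).
Proof. by move=> -[[|[|[|[|j]]]] lt_j4] //= _; rewrite mxE. Qed.

Lemma beta_supp q : supp_in (predC plane12) (beta R m2 q).
Proof. by move=> -[[|[|[|[|j]]]] lt_j4] //= _; rewrite mxE. Qed.

Lemma posroots_supp a : a \in S -> supp_in plane12 a \/ supp_in (predC plane12) a.
Proof.
by rewrite mem_cat => /orP[] /mapP[p _ ->]; [left; apply: alpha_supp | right; apply: beta_supp].
Qed.

Lemma posroots_cross a j k : a \in S -> plane12 j -> ~~ plane12 k -> a j 0 * a k 0 = 0.
Proof.
move=> /posroots_supp[] Pa Pj Pk; first by rewrite (Pa k) ?mulr0.
by rewrite (Pa j) ?mul0r //= Pj.
Qed.

Lemma bil_cvC (a b : 'cV[R]_4) : bil (cvC a) (cvC b) = toC (ip a b).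
Proof.
by rewrite /bil /ip toCE rmorph_sum; apply: eq_bigr => j _; rewrite !mxE rmorphM.
Qed.

Lemma bil_cvC_unit a : a \in S -> bil (cvC a) (cvC a) = 1.
Proof. by move=> Sa; rewrite bil_cvC posroots_unit // toCE rmorph1. Qed.

Lemma refl_invol (a : 'cV[R]_4) : ip a a = 1 -> refl a *m refl a = 1%:M.
Proof.
move=> a1; have aTa : a^T *m a = 1%:M.
  by apply/matrixP => i j; rewrite !ord1 !mxE -a1; apply: eq_bigr => k _; rewrite !mxE.
have P2 : a *m a^T *m (a *m a^T) = a *m a^T by rewrite mulmxA -(mulmxA a) aTa mulmx1.
rewrite /refl a1 divr1 mulmxBl !mulmxBr mul1mx mulmx1 -!scalemxAl -!scalemxAr mul1mx P2.
by rewrite scalerA; apply/matrixP => i j; rewrite !mxE; ring.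
Qed.

Lemma refl_commute (a b : 'cV[R]_4) : a^T *m b = 0 -> refl a *m refl b = refl b *m refl a.
Proof.
move=> ab; have ba : b^T *m a = 0 by rewrite -[a]trmxK -trmx_mul ab trmx0.
rewrite /refl !mulmxBl !mulmxBr !mul1mx !mulmx1 -!scalemxAl -!scalemxAr.
rewrite !mulmxA -[a *m a^T *m b]mulmxA -[b *m b^T *m a]mulmxA ab ba.
by rewrite !mulmx0 !mul0mx !scaler0 !subr0 addrAC.
Qed.

Lemma refl_entry (a : 'cV[R]_4) k j :
  refl a k j = (k == j)%:R - 2 / ip a a * (a k 0 * a j 0).
Proof. by rewrite /refl !mxE big_ord1 mxE. Qed.

End RootSystem.

Section DiracOperators.
Variables (R : realType) (m1 m2 : nat) (kappa : 'cV[R]_4 -> R[i]).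
Variables (B : algType R[i]) (x xi e : 'I_4 -> B) (piW : 'M[R]_4 -> B).
Hypothesis Hpi1 : piW 1%:M = 1.
Hypothesis HpiM : forall g h, inW m1 m2 g -> inW m1 m2 h -> piW (g *m h) = piW g * piW h.
Hypothesis HWx : forall g j, inW m1 m2 g -> piW g * x j = lin x (cvC (g *m ev R j)) * piW g.
Hypothesis HWxi : forall g j, inW m1 m2 g ->
  piW g * xi j = linr xi ((cvC (ev R j))^T *m invmx (map_mx (@toC R) g)) * piW g.
Hypothesis Hxx : forall j k, x j * x k = x k * x j.
Hypothesis Hxixi : forall j k, xi j * xi k = xi k * xi j.
Hypothesis Hxix : forall j k, xi j * x k - x k * xi j =
  (j == k)%:R +
  \sum_(a <- posroots R m1 m2)
     (toC (2 / ip a a) * kappa a * toC (ip (ev R j) a) * toC (ip (ev R k) a)) *: piW (refl a).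
Hypothesis He : forall j k, e j * e k + e k * e j = (2 * (j == k)%:R) *: 1.
Hypothesis Hex : forall j k, e j * x k = x k * e j.
Hypothesis Hexi : forall j k, e j * xi k = xi k * e j.
Hypothesis HepiW : forall j g, inW m1 m2 g -> e j * piW g = piW g * e j.

Local Notation S := (posroots R m1 m2).
Local Notation s a := (piW (refl a)).
Local Notation gam := (gam1 e).
Local Notation X := (\sum_(j < 4) x j * e j).
Local Notation D := (\sum_(j < 4) xi j * e j).

Lemma refl_inW a : a \in S -> inW m1 m2 (refl a).
Proof. by move=> Sa; exists [:: a]; rewrite /= posroots_rootsys // mulmx1. Qed.

Lemma refl_sq a : a \in S -> s a * s a = 1.
Proof. by move=> Sa; have W := refl_inW Sa; rewrite -HpiM // refl_invol ?(posroots_unit Sa). Qed.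

Lemma lin_refl (y : 'I_4 -> B) a j : a \in S ->
  \sum_k toC (refl a k j) *: y k = y j - (2 * toC (a j 0)) *: lin y (cvC a).
Proof.
move=> Sa; under eq_bigr do rewrite refl_entry (posroots_unit Sa) divr1 toCE rmorphB /= scalerBl.
rewrite sumrB (bigD1 j) //= rmorph_nat eqxx scale1r big1 => [|k /negbTE kj]; last first.
  by rewrite rmorph_nat kj scale0r.
rewrite addr0 /lin scaler_sumr; congr (_ - _); apply: eq_bigr => k _.
by rewrite /cvC mxE scalerA toCE !rmorphM /= rmorph_nat; congr (_ *: _); ring.
Qed.

Lemma refl_conj_x a j : a \in S ->
  s a * x j = (x j - (2 * toC (a j 0)) *: lin x (cvC a)) * s a.
Proof.
move=> Sa; rewrite HWx; last exact: refl_inW.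
by rewrite -lin_refl //; congr (_ * _); apply: eq_bigr => k _; rewrite /cvC mxE mulmx_ev.
Qed.

Lemma refl_conj_xi a j : a \in S ->
  s a * xi j = (xi j - (2 * toC (a j 0)) *: lin xi (cvC a)) * s a.
Proof.
move=> Sa; rewrite HWxi; last exact: refl_inW.
rewrite toCE -map_invmx invmx_invol ?refl_invol ?(posroots_unit Sa) // -toCE.
rewrite -lin_refl //; congr (_ * _); apply: eq_bigr => k _; congr (_ *: _).
rewrite mxE (bigD1 j) //= big1 => [|l /negbTE lj]; last by rewrite !mxE lj toCE rmorph0 mul0r.
rewrite !mxE eqxx big_ord1 !mxE toCE rmorph1 mul1r addr0.
by rewrite big_ord1 mxE eq_sym [a k _ * _]mulrC.
Qed.

Lemma refl_anticomm_lin (y : 'I_4 -> B) a : a \in S ->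
  (forall j, s a * y j = (y j - (2 * toC (a j 0)) *: lin y (cvC a)) * s a) ->
  anticomm (s a) (lin y (cvC a)).
Proof.
move=> Sa conj; rewrite /anticomm {1}/lin mulr_sumr.
under eq_bigr do rewrite -scalerAr conj scalerAl scalerBr scalerA.
rewrite -mulr_suml sumrB -scaler_suml -mulNr; congr (_ * _).
have -> : \sum_i cvC a i 0 * (2 * toC (a i 0)) = 2.
  rewrite -[RHS]mulr1 -(bil_cvC_unit Sa) mulr_sumr.
  by apply: eq_bigr => i _; rewrite /cvC mxE mulrCA.
by rewrite -/(lin y (cvC a)) scaler_nat mulr2n opprD addrA subrr add0r.
Qed.

Definition cherednik j k : B :=
  (j == k)%:R +
  \sum_(a <- S) (toC (2 / ip a a) * kappa a * toC (a j 0) * toC (a k 0)) *: s a.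

Lemma xi_x_comm j k : xi j * x k - x k * xi j = cherednik j k.
Proof. by rewrite Hxix; congr (_ + _); apply: eq_bigr => a _; rewrite !ip_ev. Qed.

Lemma cherednik_sym j k : cherednik j k = cherednik k j.
Proof.
rewrite /cherednik eq_sym; congr (_ + _); apply: eq_bigr => a _.
by rewrite -!mulrA [toC (a j 0) * _]mulrC.
Qed.

Lemma cherednik_cross j k : plane12 j -> ~~ plane12 k -> cherednik j k = 0.
Proof.
move=> Pj Pk; rewrite /cherednik; have /negbTE -> : j != k by apply: contraNneq Pk => <-.
rewrite add0r big1_seq // => a /andP[_ Sa].
by rewrite -mulrA toCE -rmorphM (posroots_cross Sa Pj Pk) rmorph0 mulr0 scale0r.
Qed.

Lemma sum_cherednik (y : 'I_4 -> B) l :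
  (forall a, a \in S -> anticomm (s a) (lin y (cvC a))) ->
  \sum_k (y k * cherednik k l + cherednik k l * y k) = 2 *: y l.
Proof.
move=> anti; rewrite /cherednik.
under eq_bigr do rewrite mulrDr mulrDl addrACA.
rewrite big_split /= [X in _ + X](_ : _ = 0) ?addr0; last first.
  under eq_bigr do rewrite mulr_sumr mulr_suml -big_split /=.
  rewrite exchange_big big1_seq // => a /andP[_ Sa].
  transitivity ((toC (2 / ip a a) * kappa a * toC (a l 0)) *:
                  (lin y (cvC a) * s a + s a * lin y (cvC a))).
    rewrite /lin mulr_suml mulr_sumr -big_split scaler_sumr; apply: eq_bigr => k _ /=.
    rewrite anticommutatorZ [in RHS]addrC anticommutatorZ scalerA /cvC mxE.
    by congr (_ *: _); [exact: mulrAC | exact: addrC].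
  by have /= -> := anti a Sa; rewrite addrN scaler0.
rewrite (bigD1 l) //= big1 => [|k /negbTE kl]; last by rewrite kl mulr0 mul0r addr0.
by rewrite eqxx mulr1 mul1r addr0 -mulr2n -scaler_nat.
Qed.

Definition euler_op : B := \sum_k (x k * xi k + xi k * x k).
Definition laplacian : B := \sum_k xi k * xi k.

Lemma euler_comm_x l : euler_op * x l - x l * euler_op = 2 *: x l.
Proof.
rewrite -(sum_cherednik l) => [|a Sa]; last first.
  by apply: refl_anticomm_lin => // j; apply: refl_conj_x.
rewrite mulr_suml mulr_sumr -sumrB; apply: eq_bigr => k _.
by rewrite commutator_anticommutator_l ?xi_x_comm.
Qed.

Lemma laplacian_comm_x l : laplacian * x l - x l * laplacian = 2 *: xi l.
Proof.
rewrite -(sum_cherednik l) => [|a Sa]; last first.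
  by apply: refl_anticomm_lin => // j; apply: refl_conj_xi.
rewrite mulr_suml mulr_sumr -sumrB; apply: eq_bigr => k _.
by rewrite commutator_sqr xi_x_comm.
Qed.

Lemma X_anticomm_D : X * D + D * X = euler_op.
Proof.
rewrite cliff_anticommutator // => j k.
by rewrite -[LHS]opprB -[RHS]opprB !xi_x_comm cherednik_sym.
Qed.

Lemma X_sqr : X * X = \sum_j x j * x j.
Proof. exact: cliff_sqr. Qed.

Lemma D_sqr : D * D = laplacian.
Proof. exact: cliff_sqr. Qed.

Definition commutes_with_H (y : B) :=
  [/\ forall j, comm (x j) y, forall j, comm (xi j) y &
      forall g, inW m1 m2 g -> comm (piW g) y].

Lemma commutes_with_H_e j : commutes_with_H (e j).
Proof. by split=> [k|k|g Wg]; rewrite /comm ?Hex ?Hexi ?HepiW. Qed.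

Lemma commutes_with_HB y z :
  commutes_with_H y -> commutes_with_H z -> commutes_with_H (y - z).
Proof. by case=> y1 y2 y3 [z1 z2 z3]; split=> *; apply: commrB; auto. Qed.

Lemma commutes_with_HM y z :
  commutes_with_H y -> commutes_with_H z -> commutes_with_H (y * z).
Proof. by case=> y1 y2 y3 [z1 z2 z3]; split=> *; apply: commrM; auto. Qed.

Lemma commutes_with_HZ c y : commutes_with_H y -> commutes_with_H (c *: y).
Proof. by case=> y1 y2 y3; split=> *; apply: commrZ; auto. Qed.

Lemma commutes_with_H_sum (I : Type) (r : seq I) (F : I -> B) :
  (forall i, commutes_with_H (F i)) -> commutes_with_H (\sum_(i <- r) F i).
Proof. by move=> HF; split=> *; apply: commr_sum => i _; case: (HF i); auto. Qed.

Lemma commutes_with_H_prod (I : Type) (r : seq I) (F : I -> B) :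
  (forall i, commutes_with_H (F i)) -> commutes_with_H (\prod_(i <- r) F i).
Proof. by move=> HF; split=> *; apply: commr_prod => i _; case: (HF i); auto. Qed.

Lemma commutes_with_H_gamw k (v : 'I_k -> 'cV[R[i]]_4) : commutes_with_H (gamw e v).
Proof.
apply/commutes_with_HZ/commutes_with_H_sum => g; apply/commutes_with_HZ/commutes_with_H_prod => i.
by apply: commutes_with_H_sum => j; apply/commutes_with_HZ/commutes_with_H_e.
Qed.

Lemma commutator_X a : commutes_with_H a ->
  X * a - a * X = \sum_l x l * (e l * a - a * e l).
Proof. by case=> xa _ _; apply: commutator_cliff_sum. Qed.

Lemma commutator_D a : commutes_with_H a ->
  D * a - a * D = \sum_l xi l * (e l * a - a * e l).
Proof. by case=> _ xia _; apply: commutator_cliff_sum. Qed.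

Lemma commutes_with_H_commutator_e a l :
  commutes_with_H a -> commutes_with_H (e l * a - a * e l).
Proof.
by move=> Ha; apply: commutes_with_HB; apply: commutes_with_HM => //; apply: commutes_with_H_e.
Qed.

Lemma Pop_commX_central a : commutes_with_H a -> comm X (Pop D X false a).
Proof.
move=> Ha; apply: Pop_commX.
  rewrite X_sqr; case: Ha => xa _ _.
  by apply/commr_sym/commr_sum => j _; apply: commrM; apply/commr_sym/xa.
rewrite X_anticomm_D commutator_X // commutator_sum_mul => [|l].
  by rewrite scaler_sumr; apply: eq_bigr => l _; rewrite euler_comm_x scalerAl.
have [xc xic _] := commutes_with_H_commutator_e l Ha.
rewrite /euler_op; apply/commr_sym/commr_sum => k _.
by apply: commrD; apply: commrM; apply/commr_sym; [exact: xc | exact: xic | exact: xic | exact: xc].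
Qed.

Lemma Pop_commD_central a : commutes_with_H a -> comm D (Pop D X false a).
Proof.
move=> Ha; apply: Pop_commD.
rewrite D_sqr commutator_X // commutator_D // commutator_sum_mul => [|l].
  by rewrite scaler_sumr; apply: eq_bigr => l _; rewrite laplacian_comm_x scalerAl.
have [_ xic _] := commutes_with_H_commutator_e l Ha.
by rewrite /laplacian; apply/commr_sym/commr_sum => k _; apply: commrM; apply/commr_sym/xic.
Qed.

Lemma refl_comm_e a j : a \in S -> comm (s a) (e j).
Proof. by move/refl_inW => W; rewrite /comm HepiW. Qed.

Lemma refl_comm_gam a v : a \in S -> comm (s a) (gam v).
Proof. by move=> Sa; apply: commr_sum => j _; apply/commrZ/refl_comm_e. Qed.

Lemma gam_root_sqr a : a \in S -> gam (cvC a) * gam (cvC a) = 1.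
Proof.
by move=> Sa; rewrite -[LHS]half_add gam_anticommutator // (bil_cvC_unit Sa) mulr1 half_scale2.
Qed.

Lemma gam_root_anticommutator_e a j :
  gam (cvC a) * e j + e j * gam (cvC a) = (2 * toC (a j 0))%:A.
Proof.
by rewrite -(gam_ev e j) gam_anticommutator // bil_cvC ip_sym ip_ev.
Qed.

Section RootConjugation.
Variables (y : 'I_4 -> B) (a : 'cV[R]_4).
Hypothesis Sa : a \in S.
Hypothesis ey : forall j k, comm (e j) (y k).
Hypothesis refl_conj_y : forall j,
  s a * y j = (y j - (2 * toC (a j 0)) *: lin y (cvC a)) * s a.
Local Notation Y := (\sum_(j < 4) y j * e j).
Local Notation L := (lin y (cvC a)).
Local Notation g := (gam (cvC a)).

Lemma refl_conj_cliff_sum : s a * Y * s a = Y - 2 *: (L * g).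
Proof.
have term j : s a * (y j * e j) * s a = (y j - (2 * toC (a j 0)) *: L) * e j.
  rewrite mulrA -mulrA -(refl_comm_e j Sa) mulrA refl_conj_y.
  by rewrite -(mulrA _ (s a) (s a)) refl_sq // mulr1.
rewrite mulr_sumr mulr_suml; under eq_bigr do rewrite term mulrBl -scalerAl.
rewrite sumrB mulr_sumr scaler_sumr; congr (_ - _); apply: eq_bigr => j _.
by rewrite -scalerAr scalerA /cvC mxE.
Qed.

Lemma gam_conj_cliff_sum : g * Y * g = 2 *: (L * g) - Y.
Proof.
have term j : g * (y j * e j) * g = y j * ((2 * toC (a j 0)) *: g - e j).
  have gy : comm g (y j).
    by rewrite gamE; apply/commr_sym/commr_sum => k _; apply/commrZ/commr_sym/ey.
  rewrite mulrA gy -!mulrA; congr (_ * _); rewrite mulrA.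
  have /(canRL (addrK _)) -> := gam_root_anticommutator_e a j.
  by rewrite mulrBl -scalerAl mul1r -mulrA gam_root_sqr // mulr1.
rewrite [g * _]mulr_sumr [_ * g]mulr_suml; under eq_bigr do rewrite term mulrBr.
rewrite sumrB mulr_suml scaler_sumr; congr (_ - _); apply: eq_bigr => j _.
by rewrite -scalerAr -scalerAl scalerA /cvC mxE.
Qed.

Lemma refl_cliff_anticomm : anticomm (s a * g) Y.
Proof.
have sg : comm (s a) g := refl_comm_gam (cvC a) Sa.
have sL : anticomm (s a) L := refl_anticomm_lin Sa refl_conj_y.
apply: anticomm_conj.
  by rewrite mulrA -(mulrA (s a)) -sg mulrA refl_sq // mul1r gam_root_sqr.
have sLgs : s a * (L * g) * s a = - (L * g).
  by rewrite !mulrA -(mulrA _ g) -sg mulrA sL !mulNr -(mulrA L) refl_sq // mulr1.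
rewrite {2}sg (_ : _ * _ * _ = s a * (g * Y * g) * s a); last by rewrite !mulrA.
rewrite gam_conj_cliff_sum mulrBr mulrBl -scalerAr -scalerAl sLgs refl_conj_cliff_sum.
by rewrite scalerN opprB addKr.
Qed.

End RootConjugation.

Lemma refl_cliff_anticomm_X a : a \in S -> anticomm (s a * gam (cvC a)) X.
Proof.
by move=> Sa; apply: (refl_cliff_anticomm Sa Hex) => j; apply: refl_conj_x.
Qed.

Lemma refl_cliff_anticomm_D a : a \in S -> anticomm (s a * gam (cvC a)) D.
Proof.
by move=> Sa; apply: (refl_cliff_anticomm Sa Hexi) => j; apply: refl_conj_xi.
Qed.

Definition rotation a b : B := - ((s a * gam (cvC a)) * (s b * gam (cvC b))).

Lemma rotationE a b : b \in S ->
  rotation a b = - (s a * s b * (gam (cvC a) * gam (cvC b))).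
Proof. by move=> Sb; rewrite /rotation !mulrA -(mulrA (s a)) -(refl_comm_gam _ Sb) !mulrA. Qed.

Lemma X_comm_rotation a b : a \in S -> b \in S -> comm X (rotation a b).
Proof.
move=> Sa Sb; apply/commrN/commr_anticommM.
  exact/anticommr_sym/refl_cliff_anticomm_X.
exact/anticommr_sym/refl_cliff_anticomm_X.
Qed.

Lemma D_comm_rotation a b : a \in S -> b \in S -> comm D (rotation a b).
Proof.
move=> Sa Sb; apply/commrN/commr_anticommM.
  exact/anticommr_sym/refl_cliff_anticomm_D.
exact/anticommr_sym/refl_cliff_anticomm_D.
Qed.

Lemma xi_e_anticomm_x_commutator a j l : commutes_with_H a ->
  (forall k, ~~ plane12 k -> comm (e k) a) -> ~~ plane12 j -> plane12 l ->
  anticomm (xi j * e j) (x l * (e l * a - a * e l)).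
Proof.
move=> Ha ea Pj Pl; have [_ xic _] := commutes_with_H_commutator_e l Ha.
have ejl : anticomm (e j) (e l).
  by apply: (e_anticomm He); apply/negP => /eqP jl; rewrite jl Pl in Pj.
apply: anticommM_split => //.
- by apply/eqP; rewrite -subr_eq0 xi_x_comm cherednik_sym cherednik_cross.
- by apply/anticommrD/anticommrN; [apply: anticommrM_comm | apply: anticommr_commM]; auto.
Qed.

Lemma commr_Pop_cross a b : commutes_with_H a -> commutes_with_H b ->
  (forall k, ~~ plane12 k -> comm (e k) a) -> (forall j, plane12 j -> comm (e j) b) ->
  comm b a -> comm b (Pop D X false a).
Proof.
(* [X, a] only involves the x_l of the plane, and the Dirac components xi_j e_j off the
   plane anticommute with those terms. *)
move=> Ha [xb xib _] ea eb ba; rewrite PopE commutator_X //.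
apply: commrB => //; apply: commrZ.
have -> : \sum_l x l * (e l * a - a * e l) = \sum_(l | plane12 l) x l * (e l * a - a * e l).
  rewrite [RHS]big_mkcond; apply: eq_bigr => l _; case: ifP => // /negbT Pl.
  by rewrite ea // subrr mulr0.
set Y := \sum_(l | plane12 l) _.
have YD2 : (\sum_(j | ~~ plane12 j) xi j * e j) * Y + Y * (\sum_(j | ~~ plane12 j) xi j * e j) = 0.
  rewrite mulr_suml mulr_sumr -big_split big1 // => j Pj /=.
  have /= -> : anticomm (xi j * e j) Y.
    by apply: anticommr_sum => l Pl; apply: xi_e_anticomm_x_commutator.
  exact: addNr.
rewrite [\sum_(j < 4) _](bigID plane12) /= mulrDl mulrDr addrACA YD2 addr0.
have bY : comm b Y.
  apply: commr_sum => l Pl; apply: commrM; first exact/commr_sym/xb.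
  by apply: commrB; apply: commrM => //; apply/commr_sym/eb.
have bD1 : comm b (\sum_(j | plane12 j) xi j * e j).
  by apply: commr_sum => j Pj; apply: commrM; apply/commr_sym; [exact: xib | exact: eb].
by apply: commrD; apply: commrM.
Qed.

Local Notation P := (Pop D X false).
Local Notation G := (gamw e (x1234 R)).

Lemma Pop_comm_Pop a b : commutes_with_H a -> commutes_with_H b ->
  comm (P a) b -> comm (P a) (P b).
Proof.
move=> Ha Hb ab; apply: commr_Pop => //; apply/commr_sym.
  exact: Pop_commD_central.
exact: Pop_commX_central.
Qed.

Lemma pseudoscalar_anticomm_cliff_sum (y : 'I_4 -> B) :
  (forall j, comm (y j) G) -> anticomm G (\sum_j y j * e j).
Proof.
move=> yG; apply: anticommr_sum => j _; apply: anticommr_commM; first exact/commr_sym/yG.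
exact/anticommr_sym/(e_anticomm_pseudoscalar He).
Qed.

Lemma Pop_comm_pseudoscalar (v : 'I_2 -> 'cV[R[i]]_4) : comm (P (gamw e v)) (P G).
Proof.
have [xG xiG _] := commutes_with_H_gamw (x1234 R).
apply: Pop_comm_Pop; [exact: commutes_with_H_gamw | exact: commutes_with_H_gamw |].
apply/commr_sym/commr_Pop_anticomm; last exact: pseudoscalar_comm_bivector.
  exact: pseudoscalar_anticomm_cliff_sum.
exact: pseudoscalar_anticomm_cliff_sum.
Qed.

Lemma commr_rotation y a b : a \in S -> b \in S -> commutes_with_H y ->
  comm y (gam (cvC a) * gam (cvC b)) -> comm y (rotation a b).
Proof.
move=> Sa Sb [_ _ piy] yg; rewrite rotationE //; apply/commrN/commrM => //.
by apply: commrM; apply/commr_sym/piy/refl_inW.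
Qed.

Lemma rotation_comm_Pop a b c : a \in S -> b \in S -> commutes_with_H c ->
  comm c (gam (cvC a) * gam (cvC b)) -> comm (rotation a b) (P c).
Proof.
move=> Sa Sb Hc cg; apply: commr_Pop; last exact/commr_sym/commr_rotation.
  exact/commr_sym/D_comm_rotation.
exact/commr_sym/X_comm_rotation.
Qed.

Lemma refl_comm_orth (Q : pred 'I_4) a b : a \in S -> b \in S ->
  supp_in Q a -> supp_in (predC Q) b -> comm (s a) (s b).
Proof.
move=> Sa Sb Qa Qb; have Wa := refl_inW Sa; have Wb := refl_inW Sb.
by rewrite /comm -!HpiM // refl_commute // (supp_orth Qa Qb).
Qed.

Lemma rotation_comm_rotation (Q : pred 'I_4) a a' b b' :
  a \in S -> a' \in S -> b \in S -> b' \in S ->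
  supp_in Q a -> supp_in Q a' -> supp_in (predC Q) b -> supp_in (predC Q) b' ->
  comm (rotation a a') (rotation b b').
Proof.
move=> Sa Sa' Sb Sb' Qa Qa' Qb Qb'; rewrite !rotationE //.
apply/commrN/commr_sym/commrN/commr_sym.
have sL d : d \in S -> supp_in (predC Q) d ->
    comm (s d) (s a * s a' * (gam (cvC a) * gam (cvC a'))).
  move=> Sd Qd; apply: commrM; last by apply: commrM; apply: refl_comm_gam.
  by apply: commrM; apply/commr_sym; [exact: refl_comm_orth Sa Sd Qa Qd |
                                        exact: refl_comm_orth Sa' Sd Qa' Qd].
apply: commrM; first by apply: commrM; apply/commr_sym; [exact: sL Sb Qb | exact: sL Sb' Qb'].
apply/commr_sym/commrM.
  by apply: commrM; apply/commr_sym/commrM; apply: refl_comm_gam.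
exact/commr_sym/(commr_gamM_orth He (supp_cvC Qa) (supp_cvC Qa') (supp_cvC Qb) (supp_cvC Qb')).
Qed.

Lemma commuting_generators (c1 c2 c3 : R[i]) : (0 < m1)%N -> (0 < m2)%N ->
  pairwise (fun u v => u * v == v * u)
    [:: c1 *: P (gamw e (zpair R 1)); c2 *: P (gamw e (zpair R 2)); c3 *: P G;
        rotation (alpha R m1 m1) (alpha R m1 1); rotation (beta R m2 m2) (beta R m2 1)].
Proof.
move=> m1_gt0 m2_gt0.
have [SA1 SAm] : alpha R m1 1 \in S /\ alpha R m1 m1 \in S.
  by split; apply: alpha_posroot; rewrite ?leqnn m1_gt0.
have [SB1 SBm] : beta R m2 1 \in S /\ beta R m2 m2 \in S.
  by split; apply: beta_posroot; rewrite ?leqnn m2_gt0.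
have supA p := supp_cvC (alpha_supp R m1 p); have supB q := supp_cvC (beta_supp R m2 q).
have sup1 := zpair1_supp R; have sup2 := zpair2_supp R.
have HG := commutes_with_H_gamw (x1234 R).
have H1 := commutes_with_H_gamw (zpair R 1); have H2 := commutes_with_H_gamw (zpair R 2).
have GA u v := commr_anticommM (pseudoscalar_anticomm_gam He u) (pseudoscalar_anticomm_gam He v).
rewrite /= !andbT; do !(apply/andP; split); apply/eqP.
- apply/commrZZ/Pop_comm_Pop => //; apply/commr_sym/commr_Pop_cross => //.
  + by move=> k; apply: (e_comm_bivector He sup1).
  + by move=> j Pj; apply: (e_comm_bivector He sup2); rewrite /= Pj.
  + exact/commr_sym/(bivector_comm_orth He sup1 sup2).
- exact/commrZZ/Pop_comm_pseudoscalar.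
- apply/commr_sym/commrZ/rotation_comm_Pop => //.
  apply: (bivector_comm_gamM_plane He (p := 0) (q := 1)) => // [i||];
    apply/supp_plane12; [exact: sup1 | exact: supA | exact: supA].
- by apply/commr_sym/commrZ/rotation_comm_Pop => //; apply: (bivector_comm_gamM_orth He sup1).
- exact/commrZZ/Pop_comm_pseudoscalar.
- by apply/commr_sym/commrZ/rotation_comm_Pop => //; apply: (bivector_comm_gamM_orth' He sup2).
- apply/commr_sym/commrZ/rotation_comm_Pop => //.
  apply: (bivector_comm_gamM_plane He (p := 2) (q := 3)) => // [i||];
    apply/supp_plane34; [exact: sup2 | exact: supB | exact: supB].
- by apply/commr_sym/commrZ/rotation_comm_Pop => //; apply: GA.
- by apply/commr_sym/commrZ/rotation_comm_Pop => //; apply: GA.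
- by apply: (rotation_comm_rotation (Q := plane12)) => //; (apply: alpha_supp || apply: beta_supp).
Qed.

End DiracOperators.

(* B receives the generators of H_kappa (x) C subject to the defining relations:
   x j = x_j (x) 1, xi j = xi_j (x) 1, piW w = w (x) 1, e j = 1 (x) e_j. *)
Theorem proposition4p2 (R : realType) (m1 m2 : nat) (Hm1 : (0 < m1)%N) (Hm2 : (0 < m2)%N)
  (kappa : 'cV[R]_4 -> R[i])
  (Hkappa : forall (g : 'M[R]_4) (a : 'cV[R]_4),
      inW m1 m2 g -> a \in rootsys R m1 m2 -> kappa (g *m a) = kappa a)
  (B : algType R[i]) (x xi e : 'I_4 -> B) (piW : 'M[R]_4 -> B)
  (* CW: group algebra of W *)
  (Hpi1 : piW 1%:M = 1)
  (HpiM : forall g h, inW m1 m2 g -> inW m1 m2 h -> piW (g *m h) = piW g * piW h)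
  (* semidirect product relations:  w x w^-1 = w.x,  w xi w^-1 = w.xi *)
  (HWx : forall g j, inW m1 m2 g -> piW g * x j = lin x (cvC (g *m ev R j)) * piW g)
  (HWxi : forall g j, inW m1 m2 g ->
      piW g * xi j = linr xi ((cvC (ev R j))^T *m invmx (map_mx (@toC R) g)) * piW g)
  (* Cherednik relations *)
  (Hxx : forall j k, x j * x k = x k * x j)
  (Hxixi : forall j k, xi j * xi k = xi k * xi j)
  (Hxix : forall j k, xi j * x k - x k * xi j =
      (j == k)%:R +
      \sum_(a <- posroots R m1 m2)
         (toC (2 / ip a a) * kappa a * toC (ip (ev R j) a) * toC (ip (ev R k) a)) *: piW (refl a))
  (* Clifford relations *)
  (He : forall j k, e j * e k + e k * e j = (2 * (j == k)%:R) *: 1)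
  (* the two tensor factors commute *)
  (Hex : forall j k, e j * x k = x k * e j)
  (Hexi : forall j k, e j * xi k = xi k * e j)
  (HepiW : forall j g, inW m1 m2 g -> e j * piW g = piW g * e j) :
  let Dirac := \sum_(j < 4) xi j * e j in
  let xs := \sum_(j < 4) x j * e j in
  let O := fun k (v : 'I_k -> 'cV[R[i]]_4) => Oop e Dirac xs v in
  let H1 := (1 / 2 : R[i]) *: O 2%N (zpair R 1) in
  let H2 := (1 / 2 : R[i]) *: O 2%N (zpair R 2) in
  let Z := O 4%N (x1234 R) in
  let st := fun a : 'cV[R]_4 => piW (refl a) * gam1 e (cvC a) in
  let r1 := - (st (alpha R m1 m1) * st (alpha R m1 1)) in
  let r2 := - (st (beta R m2 m2) * st (beta R m2 1)) in
  let t0 := [:: H1; H2; Z; r1; r2] in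
  forall a b, a \in t0 -> b \in t0 -> a * b = b * a.
Proof.
move=> Dirac xs O H1 H2 Z st r1 r2 t0.
apply: pairwise_commP; rewrite /t0 /H1 /H2 /Z /O /Oop /= !scalerA.
by apply: commuting_generators.
Qed.
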